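(* Let $Q_{\max}>0$ and let $a:(0,\infty)\to(0,\infty)$ be a strictly increasing, differentiable function (the effective bandwidth) with differentiable inverse. For a rate $r$ in the range of $a$, let $\theta(r)=a^{-1}(r)$ and define the queue violation probability $\epsilon_q(r)=\exp\{-\theta(r)Q_{\max}\}$. Let the SIR be a random variable with a probability density $f$ that is strictly positive on $(0,\infty)$, and define the link failure probability $\epsilon_r(r)=\mathbb{P}[\log(1+\mathrm{SIR})<r]$. Define the total error $\epsilon(r)=\epsilon_q(r)+\epsilon_r(r)-\epsilon_q(r)\epsilon_r(r)$. Then the equation $\epsilon_q(r)=\epsilon_r(r)$ has at most one root. Moreover, given a target error $\epsilon'\in(0,1)$, if $r^\ast$ is a root of $\epsilon_q(r)=\epsilon_r(r)$ and $$\epsilon_r(r^\ast)\le 1-\sqrt{1-\epsilon'},$$ then the target QoS $(\epsilon',Q_{\max})$ can be met by rate selection, i.e. there exists a rate $r$ (namely $r=r^\ast$) with $\epsilon(r)\le\epsilon'$.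
   Context: This formalizes the paper's approximation model: the queue violation probability at service rate $r=a(\theta)$ with tolerable queue length $Q_{\max}$ is approximated by $e^{-\theta Q_{\max}}$, the channel fails to support rate $r$ when the Shannon rate $\log(1+\mathrm{SIR})$ is below $r$, and the total error is approximated by $1-(1-\epsilon_q)(1-\epsilon_r)$. *)

From HB Require Import structures.
From mathcomp Require Import all_boot all_order all_algebra.
From mathcomp Require Import all_classical all_reals all_analysis.
Set Implicit Arguments. Unset Strict Implicit. Unset Printing Implicit Defensive.
Import Order.TTheory GRing.Theory Num.Theory.
Local Open Scope classical_set_scope.
Local Open Scope ring_scope.

Definition in_range (R : realType) (a : R -> R) (r : R) : Prop :=
  exists t, 0 < t /\ a t = r.

Definition eps_q (R : realType) (ainv : R -> R) (Qmax r : R) : R :=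
  expR (- (ainv r * Qmax)).

Definition eps_r (R : realType) d (T : measurableType d)
  (P : probability T R) (X : {RV P >-> R}) (r : R) : R :=
  fine (P [set w | ln (1 + X w) < r]).

Definition eps_total (R : realType) (eq er : R) : R := eq + er - eq * er.

From HB Require Import structures.
From mathcomp Require Import all_boot all_order all_algebra.
From mathcomp Require Import all_classical all_reals all_analysis.
From mathcomp Require Import measurable_realfun lra.
Set Implicit Arguments. Unset Strict Implicit. Unset Printing Implicit Defensive.
Import Order.TTheory GRing.Theory Num.Theory.
Local Open Scope classical_set_scope.
Local Open Scope ring_scope.

(* The link failure probability is a distribution function of [r], hence
   nondecreasing, while the queue violation probability is strictly decreasing
   in [r] on the range of [a], because [a^{-1}] is strictly increasing there.
   So [eps_q - eps_r] is strictly decreasing and vanishes at most once.  At a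
   root [e = eps_q = eps_r] the total error is [1 - (1 - e)^2], which is at
   most [eps'] exactly when [1 - e >= sqrt (1 - eps')].  Neither part uses the
   density of the SIR nor the differentiability of [a] and its inverse. *)

Lemma eq_at_most_one_root (R : realDomainType) (S : set R) (g h : R -> R) :
  {in S &, forall x y, x < y -> g y < g x} ->
  {homo h : x y / x <= y} ->
  {in S &, forall x y, g x = h x -> g y = h y -> x = y}.
Proof.
move=> g_decr h_homo x y Sx Sy gxE gyE.
have lt_root u v : u \in S -> v \in S -> g u = h u -> g v = h v -> ~ u < v.
  move=> Su Sv guE gvE uv.
  by move: (g_decr u v Su Sv uv); rewrite guE gvE ltNge h_homo ?ltW.
by case: (ltgtP x y) => // [xy|yx]; [case: (lt_root x y) | case: (lt_root y x)].
Qed.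

Lemma in_range_inv_lt (R : realType) (a ainv : R -> R) (r1 r2 : R) :
  (forall s t, 0 < s -> s < t -> a s < a t) ->
  (forall t, 0 < t -> ainv (a t) = t) ->
  in_range a r1 -> in_range a r2 -> r1 < r2 -> ainv r1 < ainv r2.
Proof.
move=> a_incr aK [t1 [t1_gt0 <-]] [t2 [t2_gt0 <-]] a12.
rewrite !aK //; case: ltgtP => // [t21|t12]; last by rewrite t12 ltxx in a12.
by move: (a_incr _ _ t2_gt0 t21); rewrite ltNge (ltW a12).
Qed.

Lemma eps_q_decr (R : realType) (a ainv : R -> R) (Qmax r1 r2 : R) :
  0 < Qmax ->
  (forall s t, 0 < s -> s < t -> a s < a t) ->
  (forall t, 0 < t -> ainv (a t) = t) ->
  in_range a r1 -> in_range a r2 -> r1 < r2 ->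
  eps_q ainv Qmax r2 < eps_q ainv Qmax r1.
Proof.
move=> Qmax_gt0 a_incr aK ar1 ar2 r12.
by rewrite /eps_q ltr_expR ltrN2 ltr_pM2r // (in_range_inv_lt a_incr aK ar1 ar2).
Qed.

Lemma eps_r_nondecr (R : realType) (d : measure_display) (T : measurableType d)
  (P : probability T R) (X : {RV P >-> R}) :
  {homo eps_r X : r1 r2 / r1 <= r2}.
Proof.
move=> r1 r2 r12.
have mX : measurable_fun setT (fun w => ln (1 + X w)).
  by apply: (measurableT_comp (@measurable_ln R)); exact: measurable_funD.
have mS r : measurable [set w | ln (1 + X w) < r].
  by rewrite -preimage_itvNyo -[_ @^-1` _]setTI; exact: mX.
apply: fine_le; rewrite ?fin_num_measure ?inE //.
by apply: le_measure; rewrite ?inE // => w /= /lt_le_trans; apply.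
Qed.

Lemma eps_total_diag_le (R : realType) (e eps' : R) :
  eps' <= 1 -> e <= 1 - Num.sqrt (1 - eps') -> eps_total e e <= eps'.
Proof.
move=> eps'_le1 e_le.
have sqrt_le : Num.sqrt (1 - eps') <= 1 - e by lra.
have : Num.sqrt (1 - eps') ^+ 2 <= (1 - e) ^+ 2.
  by rewrite ler_sqr // nnegrE ?sqrtr_ge0 // (le_trans (sqrtr_ge0 _) sqrt_le).
rewrite sqr_sqrtr ?subr_ge0 // /eps_total expr2; nra.
Qed.

Theorem theorem3 (R : realType) (d : measure_display) (T : measurableType d)
  (P : probability T R) (X : {RV P >-> R}) (f : R -> R)
  (a ainv : R -> R) (Qmax : R) :
  0 < Qmax ->
  (* effective bandwidth a : (0,oo) -> (0,oo), strictly increasing, differentiable *)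
  (forall t, 0 < t -> 0 < a t) ->
  (forall s t, 0 < s -> s < t -> a s < a t) ->
  (forall t, 0 < t -> derivable a t 1) ->
  (* ainv is the inverse of a on its range, and is differentiable there *)
  (forall t, 0 < t -> ainv (a t) = t) ->
  (forall t, 0 < t -> derivable ainv (a t) 1) ->
  (* the SIR X is nonnegative and has density f, strictly positive on (0,oo) *)
  (forall w, 0 <= X w) ->
  measurable_fun setT f ->
  (forall x, 0 <= f x) ->
  (forall x, 0 < x -> 0 < f x) ->
  (forall A, measurable A ->
     P (X @^-1` A) = (\int[lebesgue_measure]_(x in A) (f x)%:E)%E) ->
  (* at most one root of eps_q = eps_r *)
  (forall r1 r2, in_range a r1 -> in_range a r2 ->
     eps_q ainv Qmax r1 = eps_r X r1 ->
     eps_q ainv Qmax r2 = eps_r X r2 -> r1 = r2) /\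
  (* sufficient condition for meeting the target QoS *)
  (forall eps' rstar, 0 < eps' < 1 -> in_range a rstar ->
     eps_q ainv Qmax rstar = eps_r X rstar ->
     eps_r X rstar <= 1 - Num.sqrt (1 - eps') ->
     exists r, in_range a r /\
       eps_total (eps_q ainv Qmax r) (eps_r X r) <= eps').
Proof.
move=> Qmax_gt0 _ a_incr _ aK _ _ _ _ _ _; split.
  move=> r1 r2 ar1 ar2.
  apply: (@eq_at_most_one_root _ (in_range a) (eps_q ainv Qmax) (eps_r X)).
  - by move=> x y /set_mem ax /set_mem ay; exact: (eps_q_decr Qmax_gt0 a_incr aK ax ay).
  - by move=> x y; exact: eps_r_nondecr.
  - exact: mem_set.
  - exact: mem_set.
move=> eps' rstar /andP[_ eps'_lt1] arstar root_rstar rstar_le.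
exists rstar; split => //.
by rewrite root_rstar; exact: eps_total_diag_le (ltW eps'_lt1) rstar_le.
Qed.
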